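(* For any locale $L$, the subset $M_L:=\bigcap_{a\in L}\mathfrak{o}(a^*\vee a^{**})$ is a dense extremally disconnected sublocale of $L$, and every dense extremally disconnected sublocale $S$ of $L$ satisfies $S\subseteq M_L$; i.e. $M_L$ is the largest dense extremally disconnected sublocale of $L$.
   Context: A frame (locale) $L$ is a complete lattice in which finite meets distribute over arbitrary joins; $a\to b$ denotes the Heyting implication and $a^*=a\to0$ the pseudocomplement. A sublocale of $L$ is a subset $S\subseteq L$ closed under arbitrary meets such that $a\to s\in S$ for all $a\in L$, $s\in S$; it is a frame under the inherited order. The open sublocale of $a\in L$ is $\mathfrak{o}(a)=\{a\to b\mid b\in L\}$. A sublocale $S$ is dense if $\bigwedge S=0$. A locale (frame) is extremally disconnected if $x^*\vee x^{**}=1$ for all its elements $x$ (pseudocomplements and joins computed in that frame). *)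

Record frame := Frame {
  car :> Type;
  le : car -> car -> Prop;
  le_refl : forall x, le x x;
  le_trans : forall x y z, le x y -> le y z -> le x z;
  le_antisym : forall x y, le x y -> le y x -> x = y;
  sup : (car -> Prop) -> car;
  sup_ub : forall (A : car -> Prop) x, A x -> le x (sup A);
  sup_least : forall (A : car -> Prop) y, (forall x, A x -> le x y) -> le (sup A) y;
  meet : car -> car -> car;
  meet_lb1 : forall a b, le (meet a b) a;
  meet_lb2 : forall a b, le (meet a b) b;
  meet_glb : forall a b c, le c a -> le c b -> le c (meet a b);
  meet_sup_distr : forall a (A : car -> Prop),
    meet a (sup A) = sup (fun y => exists x, A x /\ y = meet a x)
}.

Arguments le {L} : rename.
Arguments sup {L} : rename.
Arguments meet {L} : rename.

Section FrameOps.
Variable L : frame.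

Definition inf (A : L -> Prop) : L := sup (fun x => forall a, A a -> le x a).
Definition top : L := sup (fun _ => True).
Definition bot : L := sup (fun _ => False).
Definition join (a b : L) : L := sup (fun x => x = a \/ x = b).

Definition imp (a b : L) : L := sup (fun c => le (meet c a) b).
Definition pc (a : L) : L := imp a bot.

Definition is_sublocale (S : L -> Prop) : Prop :=
  (forall A : L -> Prop, (forall x, A x -> S x) -> S (inf A)) /\
  (forall a s, S s -> S (imp a s)).

Definition open_sub (a : L) : L -> Prop := fun x => exists b, x = imp a b.

Definition dense (S : L -> Prop) : Prop := inf S = bot.

(* Frame operations of a sublocale S, computed in S with the inherited order:
   joins in S, bottom of S, pseudocomplement in S; the top of S is top. *)
Definition sjoin (S : L -> Prop) (A : L -> Prop) : L :=
  inf (fun s => S s /\ forall a, A a -> le a s).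
Definition sbot (S : L -> Prop) : L := inf S.
Definition spc (S : L -> Prop) (x : L) : L :=
  sjoin S (fun s => S s /\ le (meet s x) (sbot S)).

Definition ext_disc_sub (S : L -> Prop) : Prop :=
  forall x, S x ->
    sjoin S (fun y => y = spc S x \/ y = spc S (spc S x)) = top.

Definition M_L : L -> Prop :=
  fun x => forall a : L, open_sub (join (pc a) (pc (pc a))) x.

End FrameOps.

Arguments inf {L}. Arguments top {L}. Arguments bot {L}. Arguments join {L}.
Arguments imp {L}. Arguments pc {L}. Arguments is_sublocale {L}.
Arguments open_sub {L}. Arguments dense {L}. Arguments sjoin {L}.
Arguments sbot {L}. Arguments spc {L}. Arguments ext_disc_sub {L}.


(* Write c_a for a* \/ a**.  Since c_a* = 0, every o(c_a) contains 0, so M_L is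
   a dense intersection of open sublocales.  In a dense sublocale pseudocomplements
   are those of L, so extremal disconnectedness says: an element of the sublocale
   above x* and x** is 1.  For s in M_L this holds because c_x <= s forces
   s = c_x -> s = 1.  Conversely, if S is dense and extremally disconnected and
   x is in S, then y := c_a -> x satisfies a* <= y -> x and a** <= y -> x, with
   y -> x in S, hence y -> x = 1, i.e. y <= x: x lies in o(c_a). *)

Section FrameLemmas.

Variable L : frame.
Implicit Types a b c s x y : L.
Implicit Types A S : L -> Prop.

Lemma le_meet_l a b c : le a c -> le (meet a b) c.
Proof. intro H. eapply le_trans; [apply meet_lb1 | exact H]. Qed.

Lemma le_meet_r a b c : le b c -> le (meet a b) c.
Proof. intro H. eapply le_trans; [apply meet_lb2 | exact H]. Qed.

Lemma meetC a b : meet a b = meet b a.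
Proof. apply le_antisym; apply meet_glb; (apply meet_lb1 || apply meet_lb2). Qed.

Lemma inf_lb A a : A a -> le (inf A) a.
Proof. intro Aa. apply sup_least. intros x Hx. exact (Hx a Aa). Qed.

Lemma inf_glb A y : (forall a, A a -> le y a) -> le y (inf A).
Proof. intro H. apply sup_ub. exact H. Qed.

Lemma le_top x : le x top.
Proof. apply sup_ub. exact I. Qed.

Lemma top_le_eq x : le top x -> x = top.
Proof. intro H. apply le_antisym; [apply le_top | exact H]. Qed.

Lemma bot_le x : le bot x.
Proof. apply sup_least. intros y []. Qed.

Lemma join_ub_l a b : le a (join a b).
Proof. apply sup_ub. now left. Qed.

Lemma join_ub_r a b : le b (join a b).
Proof. apply sup_ub. now right. Qed.

Lemma join_lub a b c : le a c -> le b c -> le (join a b) c.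
Proof. intros Ha Hb. apply sup_least. intros x [-> | ->]; assumption. Qed.

Lemma le_imp y a b : le y (imp a b) <-> le (meet y a) b.
Proof.
  split; intro H.
  - apply le_trans with (meet (imp a b) a).
    { apply meet_glb; [apply le_meet_l, H | apply meet_lb2]. }
    rewrite meetC. unfold imp. rewrite meet_sup_distr.
    apply sup_least. intros x [c [Hc ->]]. rewrite meetC. exact Hc.
  - apply sup_ub. exact H.
Qed.

Lemma imp_meet_le a b : le (meet (imp a b) a) b.
Proof. apply le_imp, le_refl. Qed.

Lemma le_imp_r c x : le x (imp c x).
Proof. apply le_imp, meet_lb1. Qed.

Lemma imp_le_r c x y : le x y -> le (imp c x) (imp c y).
Proof. intro H. apply le_imp. eapply le_trans; [apply imp_meet_le | exact H]. Qed.

Lemma imp_eq_top a b : imp a b = top -> le a b.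
Proof.
  intro H. apply le_trans with (meet a (imp a b)).
  - apply meet_glb; [apply le_refl | rewrite H; apply le_top].
  - rewrite meetC. apply imp_meet_le.
Qed.

Lemma imp_comm a b x : imp a (imp b x) = imp b (imp a x).
Proof.
  assert (swap : forall a b, le (imp a (imp b x)) (imp b (imp a x))).
  { clear a b. intros a b. apply le_imp, le_imp.
    set (y := imp a (imp b x)).
    apply le_trans with (meet (imp b x) b); [| apply imp_meet_le].
    apply meet_glb; [| apply le_meet_l, meet_lb2].
    apply le_trans with (meet y a); [| apply imp_meet_le].
    apply meet_glb; [apply le_meet_l, meet_lb1 | apply meet_lb2]. }
  apply le_antisym; apply swap.
Qed.

Lemma le_imp_imp b c x : le b c -> le b (imp (imp c x) x).
Proof.
  intro Hb. apply le_imp. rewrite meetC.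
  apply le_trans with (meet (imp c x) c); [| apply imp_meet_le].
  apply meet_glb; [apply meet_lb1 | apply le_meet_r, Hb].
Qed.

Lemma pc_meet_le a : le (meet (pc a) a) bot.
Proof. apply imp_meet_le. Qed.

Lemma pc_le_anti a b : le a b -> le (pc b) (pc a).
Proof.
  intro H. apply le_imp. apply le_trans with (meet (pc b) b); [| apply pc_meet_le].
  apply meet_glb; [apply meet_lb1 | apply le_meet_r, H].
Qed.

Lemma le_pc_pc a : le a (pc (pc a)).
Proof. apply le_imp. rewrite meetC. apply pc_meet_le. Qed.

Lemma pc_pc_pc a : pc (pc (pc a)) = pc a.
Proof. apply le_antisym; [apply pc_le_anti, le_pc_pc | apply le_pc_pc]. Qed.

Lemma pc_join_pc_pc a : pc (join (pc a) (pc (pc a))) = bot.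
Proof.
  apply le_antisym; [| apply bot_le].
  apply le_trans with (meet (pc (pc (pc a))) (pc (pc a))); [| apply pc_meet_le].
  apply meet_glb; apply pc_le_anti; [apply join_ub_r | apply join_ub_l].
Qed.

Lemma open_subP c x : open_sub c x <-> imp c x = x.
Proof.
  split.
  - intros [b ->]. apply le_antisym; [| apply le_imp_r].
    apply le_imp. eapply le_trans; [| apply (imp_meet_le c b)].
    apply meet_glb; [apply imp_meet_le | apply meet_lb2].
  - intro H. exists x. now rewrite H.
Qed.

Lemma open_sub_top c s : open_sub c s -> le c s -> s = top.
Proof.
  intros Os Hc. apply open_subP in Os. rewrite <- Os.
  apply top_le_eq, le_imp, le_meet_r, Hc.
Qed.

Lemma is_sublocale_open c : is_sublocale (open_sub c).
Proof.
  split.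
  - intros A HA. apply open_subP, le_antisym; [| apply le_imp_r].
    apply inf_glb. intros s As.
    rewrite <- (proj1 (open_subP c s) (HA s As)).
    apply imp_le_r, inf_lb, As.
  - intros a s Os. apply open_subP in Os. apply open_subP.
    now rewrite imp_comm, Os.
Qed.

Lemma is_sublocale_bigcap (I : Type) (F : I -> L -> Prop) :
  (forall i, is_sublocale (F i)) -> is_sublocale (fun x => forall i, F i x).
Proof.
  intro HF. split.
  - intros A HA i. apply (proj1 (HF i)). intros x Ax. apply HA, Ax.
  - intros a s Ss i. apply (proj2 (HF i)), Ss.
Qed.

Lemma dense_of_bot S : S bot -> dense S.
Proof. intro Sb. apply le_antisym; [apply inf_lb, Sb | apply bot_le]. Qed.

Section DenseSublocale.

Variable S : L -> Prop.
Hypothesis S_sub : is_sublocale S.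
Hypothesis S_dense : dense S.

Lemma dense_sub_bot : S bot.
Proof. rewrite <- S_dense. apply (proj1 S_sub). trivial. Qed.

Lemma dense_sub_pc a : S (pc a).
Proof. apply (proj2 S_sub), dense_sub_bot. Qed.

Lemma sjoin_greatest A m :
  S m -> A m -> (forall a, A a -> le a m) -> sjoin S A = m.
Proof.
  intros Sm Am Hm. apply le_antisym.
  - apply inf_lb. split; assumption.
  - apply inf_glb. intros s [_ Hs]. apply Hs, Am.
Qed.

Lemma spc_dense x : spc S x = pc x.
Proof.
  unfold spc, sbot. rewrite S_dense. apply sjoin_greatest.
  - apply dense_sub_pc.
  - split; [apply dense_sub_pc | apply pc_meet_le].
  - intros s [_ Hs]. apply le_imp, Hs.
Qed.

Lemma sjoin_eq_top A :
  sjoin S A = top <-> forall s, S s -> (forall a, A a -> le a s) -> s = top.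
Proof.
  split.
  - intros H s Ss Hs. apply top_le_eq. rewrite <- H. apply inf_lb. split; assumption.
  - intro H. apply top_le_eq, inf_glb. intros s [Ss Hs]. rewrite (H s Ss Hs).
    apply le_refl.
Qed.

Lemma ext_disc_dense_sub :
  ext_disc_sub S <->
  forall x s, S x -> S s -> le (pc x) s -> le (pc (pc x)) s -> s = top.
Proof.
  unfold ext_disc_sub. split.
  - intros E x s Sx Ss H1 H2. specialize (E x Sx). rewrite !spc_dense in E.
    apply (proj1 (sjoin_eq_top _) E s Ss). intros y [-> | ->]; assumption.
  - intros E x Sx. rewrite !spc_dense. apply sjoin_eq_top.
    intros s Ss Hs. apply (E x s Sx Ss); apply Hs; auto.
Qed.

End DenseSublocale.

End FrameLemmas.

Lemma M_L_sublocale (L : frame) : is_sublocale (M_L L).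
Proof. apply is_sublocale_bigcap. intro a. apply is_sublocale_open. Qed.

Lemma M_L_dense (L : frame) : dense (M_L L).
Proof.
  apply dense_of_bot. intro a. apply open_subP.
  exact (pc_join_pc_pc L a).
Qed.

Theorem proposition4p2 (L : frame) :
  (is_sublocale (M_L L) /\ dense (M_L L) /\ ext_disc_sub (M_L L)) /\
  (forall S : L -> Prop,
     is_sublocale S -> dense S -> ext_disc_sub S ->
     forall x, S x -> M_L L x).
Proof.
  pose proof (M_L_sublocale L) as Msub.
  pose proof (M_L_dense L) as Mdense.
  split; [split; [exact Msub | split; [exact Mdense |]] |].
  - apply (ext_disc_dense_sub L _ Msub Mdense).
    intros x s _ Ms Hpc Hpcpc. apply (open_sub_top L _ _ (Ms x)), join_lub; assumption.
  - intros S Ssub Sdense Sext x Sx a.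
    apply open_subP, le_antisym; [| apply le_imp_r].
    apply imp_eq_top.
    apply (proj1 (ext_disc_dense_sub L S Ssub Sdense) Sext (pc a)).
    + apply dense_sub_pc; assumption.
    + apply (proj2 Ssub), Sx.
    + apply le_imp_imp, join_ub_r.
    + rewrite pc_pc_pc. apply le_imp_imp, join_ub_l.
Qed.
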